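(* Let $\mathcal{K}$ be a Fraïssé class in a finite relational language $\mathcal{L}$, let $\mathbf{K}=\mathrm{Flim}(\mathcal{K})$ have finite big Ramsey degrees, and let $\mathbf{K}^*$ be a recurrent big Ramsey structure for $\mathbf{K}$. Then $\mathbf{K}^*$ interprets an ordering of the underlying set $K$ of $\mathbf{K}$ of order type $\omega$.
   Context: For structures $\mathbf{A},\mathbf{B}$, $\mathrm{Emb}(\mathbf{A},\mathbf{B})$ is the set of embeddings. For $\mathbf{A}\in\mathcal{K}$, the big Ramsey degree $\mathrm{BRD}(\mathbf{A},\mathbf{K})$ is the least $t$ (if it exists) such that for every $r>t$ and every coloring $\chi:\mathrm{Emb}(\mathbf{A},\mathbf{K})\to r$ there is $g\in\mathrm{Emb}(\mathbf{K},\mathbf{K})$ with $|\chi[g\circ\mathrm{Emb}(\mathbf{A},\mathbf{K})]|\le t$. For $\mathcal{L}^*\supseteq\mathcal{L}$ and an $\mathcal{L}^*$-expansion $\mathbf{M}^*$ of $\mathbf{M}$ (same underlying set, $\mathcal{L}$-reduct equal to $\mathbf{M}$), $\mathbf{M}^*(\mathbf{B})$ denotes the set of $\mathcal{L}^*$-expansions of the finite structure $\mathbf{B}$ embeddable in $\mathbf{M}^*$, and for $f\in\mathrm{Emb}(\mathbf{B},\mathbf{M})$, $\mathbf{M}^*\cdot f$ is the unique $\mathbf{B}^*\in\mathbf{M}^*(\mathbf{B})$ with $f\in\mathrm{Emb}(\mathbf{B}^*,\mathbf{M}^* )$. A big Ramsey structure for $\mathbf{K}$ is an expansion $\mathbf{K}^*$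 such that for every $\mathbf{A}\in\mathcal{K}$, $|\mathbf{K}^*(\mathbf{A})|=\mathrm{BRD}(\mathbf{A},\mathbf{K})$ and for every $g\in\mathrm{Emb}(\mathbf{K},\mathbf{K})$ the coloring $f\mapsto\mathbf{K}^*\cdot f$ takes all $|\mathbf{K}^*(\mathbf{A})|$ values on $g\circ\mathrm{Emb}(\mathbf{A},\mathbf{K})$. It is recurrent if $\mathrm{Emb}(\mathbf{K}^*,\mathbf{K}^*\cdot\eta)\ne\emptyset$ for every $\eta\in\mathrm{Emb}(\mathbf{K},\mathbf{K})$, where $\mathbf{K}^*\cdot\eta$ is the expansion of $\mathbf{K}$ pulled back along $\eta$. *)

From mathcomp Require Import all_boot.
Set Implicit Arguments. Unset Strict Implicit. Unset Printing Implicit Defensive.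

Record lang := Lang { sym :> Type; arity : sym -> nat }.

Definition structure (L : lang) (T : Type) := forall s : L, ('I_(arity s) -> T) -> Prop.

Definition is_emb (L : lang) (A B : Type) (SA : structure L A) (SB : structure L B)
  (f : A -> B) : Prop :=
  injective f /\ forall (s : L) (x : 'I_(arity s) -> A), SA s x <-> SB s (f \o x).

(** Pull-back of a structure along a map (this is  M^* . f  of the paper). *)
Definition pullback (L : lang) (A B : Type) (SB : structure L B) (f : A -> B)
  : structure L A := fun s x => SB s (f \o x).

(** Expanded language  L^* = L + E  (any L^* containing L is of this form up to renaming). *)
Definition lang_ext (L : lang) (E : Type) (arE : E -> nat) : lang :=
  @Lang (sym L + E)%type (fun s => match s with inl s => arity s | inr e => arE e end).

Definition is_expansion (L : lang) (E : Type) (arE : E -> nat) (T : Type)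
  (M : structure L T) (Ms : structure (lang_ext L arE) T) : Prop :=
  forall (s : L) (x : 'I_(arity s) -> T), Ms (inl s) x <-> M s x.

Definition has_card (T : Type) (S : T -> Prop) (n : nat) : Prop :=
  exists e : 'I_n -> T, injective e /\ forall x, S x <-> exists i, e i = x.

(** K (on nat, i.e. countably infinite) is ultrahomogeneous: any two embeddings of a
    finite structure differ by an automorphism. Then K is the Fraisse limit of its age. *)
Definition ultrahomogeneous (L : lang) (K : structure L nat) : Prop :=
  forall n (A : structure L 'I_n) (f g : 'I_n -> nat),
    is_emb A K f -> is_emb A K g ->
    exists sg : nat -> nat, is_emb K K sg /\ bijective sg /\ forall i, g i = sg (f i).

Definition in_age (L : lang) (K : structure L nat) n (A : structure L 'I_n) : Prop :=
  exists f, is_emb A K f.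

Definition ramsey_bound (L : lang) n (A : structure L 'I_n) (K : structure L nat) (t : nat)
  : Prop :=
  forall r, t < r -> forall chi : ('I_n -> nat) -> 'I_r,
    exists g : nat -> nat, is_emb K K g /\
      exists cs : seq 'I_r, size cs <= t /\
        forall f, is_emb A K f -> chi (g \o f) \in cs.

Definition BRD (L : lang) n (A : structure L 'I_n) (K : structure L nat) (t : nat) : Prop :=
  ramsey_bound A K t /\ forall t', ramsey_bound A K t' -> t <= t'.

Definition finite_BRD (L : lang) (K : structure L nat) : Prop :=
  forall n (A : structure L 'I_n), in_age K A -> exists t, BRD A K t.

Definition Kstar_of (L : lang) (E : Type) (arE : E -> nat) (K : structure L nat)
  (Ks : structure (lang_ext L arE) nat) n (A : structure L 'I_n)
  : structure (lang_ext L arE) 'I_n -> Prop :=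
  fun B => is_expansion A B /\ exists f, is_emb B Ks f.

Definition big_ramsey_structure (L : lang) (E : Type) (arE : E -> nat)
  (K : structure L nat) (Ks : structure (lang_ext L arE) nat) : Prop :=
  is_expansion K Ks /\
  forall n (A : structure L 'I_n), in_age K A ->
    (exists t, BRD A K t /\ has_card (Kstar_of K Ks A) t) /\
    (forall g, is_emb K K g ->
       forall B, Kstar_of K Ks A B ->
         exists f, is_emb A K f /\ pullback Ks (g \o f) = B).

Definition recurrent (L : lang) (E : Type) (arE : E -> nat)
  (K : structure L nat) (Ks : structure (lang_ext L arE) nat) : Prop :=
  forall eta, is_emb K K eta -> exists h, is_emb Ks (pullback Ks eta) h.

Definition pair_fn (a b : nat) : 'I_2 -> nat := fun i => if i == ord0 then a else b.

(** M interprets an ordering of its underlying set of order type omega: there is a binary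
    relation determined by the (quantifier-free) type of pairs of distinct elements in M
    which is a strict linear order isomorphic to (nat, <). *)
Definition interprets_omega_order (L : lang) (M : structure L nat) : Prop :=
  exists lt : nat -> nat -> Prop,
    (forall a b c d, a <> b -> c <> d ->
       (forall (s : L) (x : 'I_(arity s) -> 'I_2),
          M s (pair_fn a b \o x) <-> M s (pair_fn c d \o x)) ->
       (lt a b <-> lt c d)) /\
    exists h : nat -> nat, bijective h /\ forall a b, lt a b <-> h a < h b.

From mathcomp Require Import all_boot boolp.
Set Implicit Arguments. Unset Strict Implicit. Unset Printing Implicit Defensive.

(** Fix a quantifier-free type [A] of pairs and a copy [g0] of [K]. Colour each
    embedding [f] of [A] by the [K^*]-type of [g0 \o f] together with the order
    of its two points in [nat]. On some copy [g] of [K] this colouring takes at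
    most [BRD(A,K)] values, while all [BRD(A,K)] expanded types still occur
    there; hence on [g0 \o g] the [K^*]-type decides the order. Iterating over
    the finitely many pair types gives a copy [G] on which the [K^*]-type of
    every pair decides its order, and recurrence gives an embedding [H] of
    [K^*] into [K^* \cdot G]. So [a < b] iff [G (H a) < G (H b)] is defined by
    [K^*]-types of pairs, and since [G \o H] is injective its order type is
    omega. *)

Lemma injective_nat_unbounded (r : nat -> nat) n :
  injective r -> exists a, n <= r a.
Proof.
move=> r_inj; suff /existsP[a le_n_ra] : [exists a : 'I_n.+1, n <= r a] by exists a.
apply/contraT; rewrite negb_exists => /forallP small.
have lt_r_n (a : 'I_n.+1) : r a < n by rewrite ltnNge small.
have := leq_card (fun a => Ordinal (lt_r_n a)).
rewrite !card_ord ltnn; apply=> a b [] /r_inj; exact: val_inj.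
Qed.

Section OrderTypeOfInjection.

Variable k : nat -> nat.

Definition count_image (M : nat) : nat :=
  count (fun m => `[< exists x, k x = m >]) (iota 0 M).

Definition image_rank (a : nat) : nat := count_image (k a).

Lemma count_imageS M : count_image M.+1 = count_image M + `[< exists x, k x = M >].
Proof. by rewrite /count_image -addn1 iotaD count_cat /= addn0. Qed.

Lemma leq_count_image M N : M <= N -> count_image M <= count_image N.
Proof.
by move=> le_MN; rewrite /count_image -(subnKC le_MN) iotaD count_cat leq_addr.
Qed.

Lemma count_image_hit n M : n < count_image M -> exists x, image_rank x = n.
Proof.
elim: M => [|M IHM] //; rewrite count_imageS.
have [/IHM //|le_M_n] := ltnP n (count_image M).
case: asboolP => [[x kx]|_]; last by rewrite addn0 ltnNge le_M_n.
rewrite addn1 ltnS => le_n_M; exists x.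
by rewrite /image_rank kx; apply/eqP; rewrite eqn_leq le_M_n le_n_M.
Qed.

Lemma image_rank_ltE a b : (image_rank a < image_rank b) = (k a < k b).
Proof.
have [lt_ab|le_ba] := ltnP (k a) (k b).
  apply: leq_trans (leq_count_image lt_ab).
  by rewrite count_imageS (asboolT (ex_intro (fun x => k x = k a) a erefl)) addn1.
by apply/negbTE; rewrite -leqNgt leq_count_image.
Qed.

Hypothesis k_inj : injective k.

Lemma image_rank_inj : injective image_rank.
Proof.
move=> a b eq_rank; apply: k_inj.
by case: (ltngtP (k a) (k b)) => // ; rewrite -image_rank_ltE eq_rank ltnn.
Qed.

Lemma image_rank_surj n : exists a, image_rank a == n.
Proof.
have [a lt_n_ra] := injective_nat_unbounded n.+1 image_rank_inj.
by have [x <-] := count_image_hit lt_n_ra; exists x.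
Qed.

Lemma injective_order_iso :
  exists h, bijective h /\ forall a b, k a < k b <-> h a < h b.
Proof.
pose g n := xchoose (image_rank_surj n).
have gK : cancel g image_rank by move=> n; exact/eqP/(xchooseP (image_rank_surj n)).
exists image_rank; split; last by move=> a b; rewrite image_rank_ltE.
exact: Bijective (inj_can_sym gK image_rank_inj) gK.
Qed.

End OrderTypeOfInjection.

Section Embeddings.

Variable L : lang.

Lemma is_emb_id (A : Type) (SA : structure L A) : is_emb SA SA id.
Proof. by split. Qed.

Lemma is_emb_comp (A B C : Type) (SA : structure L A) (SB : structure L B)
    (SC : structure L C) f g :
  is_emb SA SB f -> is_emb SB SC g -> is_emb SA SC (g \o f).
Proof.
move=> [f_inj f_rel] [g_inj g_rel]; split; first exact: inj_comp.
by move=> s x; rewrite f_rel; exact: (g_rel s (f \o x)).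
Qed.

Lemma pullback_ext (A B : Type) (SB : structure L B) (f g : A -> B) :
  (forall s x, SB s (f \o x) <-> SB s (g \o x)) -> pullback SB f = pullback SB g.
Proof.
move=> same; apply: functional_extensionality_dep => s; apply/funext => x.
by apply: propext; exact: same.
Qed.

Lemma is_emb_pullback (A B C : Type) (SA : structure L A) (SB : structure L B)
    (f : A -> B) (x : C -> A) :
  is_emb SA SB f -> pullback SB (f \o x) = pullback SA x.
Proof.
case=> _ f_rel; apply: functional_extensionality_dep => s; apply/funext => y.
by apply: propext; exact: iff_sym (f_rel s (x \o y)).
Qed.

End Embeddings.

Lemma injective_of_covering (T T' : finType) (f : T -> T') (S : {set T})
    (C : {set T'}) :
  C \subset f @: S -> #|S| <= #|C| -> {in S &, injective f}.
Proof.
move=> C_sub card_S; apply/imset_injP; rewrite eqn_leq leq_imset_card.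
exact: leq_trans card_S (subset_leq_card C_sub).
Qed.

Section BigRamsey.

Variables (L : lang) (E : Type) (arE : E -> nat).
Variables (K : structure L nat) (Ks : structure (lang_ext L arE) nat).
Hypothesis Ks_brs : big_ramsey_structure K Ks.

Lemma big_ramsey_refines_coloring n (A : structure L 'I_n)
    (c : ('I_n -> nat) -> bool) g0 :
  is_emb K K g0 ->
  exists g, is_emb K K g /\
    forall f1 f2, is_emb A K f1 -> is_emb A K f2 ->
      pullback Ks (g0 \o (g \o f1)) = pullback Ks (g0 \o (g \o f2)) ->
      c (g \o f1) = c (g \o f2).
Proof.
move=> g0_emb; have [A_age|A_not_age] := pselect (in_age K A); last first.
  exists id; split=> [|f1 f2 f1_emb]; first exact: is_emb_id.
  by case: A_not_age; exists f1.
have [[t [[ramsey _] [e [e_inj e_onto]]]] realized] := Ks_brs.2 n A A_age.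
pose tau f : option 'I_t := [pick i | `[< e i = pullback Ks (g0 \o f) >] ].
pose chi f := enum_rank (tau f, c f).
have t_lt : t < #|{: option 'I_t * bool}|.
  by rewrite card_prod card_option card_bool card_ord leq_pmulr.
have [g [g_emb [cs [size_cs chi_cs]]]] := ramsey _ t_lt chi.
exists g; split=> //.
have tau_e f i : e i = pullback Ks (g0 \o f) -> tau f = Some i.
  rewrite /tau; case: pickP => [j /asboolP ej ei|];
    last by move=> /(_ i)/negbT/asboolPn not_ei /not_ei.
  by congr Some; apply: e_inj; rewrite ej ei.
pose S := [set x in cs].
pose dec (x : 'I_#|{: option 'I_t * bool}|) : option 'I_t := (enum_val x).1.
have dec_chi f : dec (chi f) = tau f by rewrite /dec enum_rankK.
have all_types : [set Some i | i : 'I_t] \subset dec @: S.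
  apply/subsetP => _ /imsetP[i _ ->].
  have [f [f_emb f_ei]] :=
    realized _ (is_emb_comp g_emb g0_emb) (e i) ((e_onto _).2 (ex_intro _ i erefl)).
  apply/imsetP; exists (chi (g \o f)); first by rewrite inE chi_cs.
  by rewrite dec_chi (tau_e _ i (esym f_ei)).
have dec_inj : {in S &, injective dec}.
  apply: (injective_of_covering all_types).
  rewrite card_imset ?cardsE ?card_ord; last exact: Some_inj.
  exact: leq_trans (card_size cs) size_cs.
move=> f1 f2 f1_emb f2_emb same_type.
suff /enum_rank_inj[] : chi (g \o f1) = chi (g \o f2) by [].
by apply: dec_inj; rewrite ?inE ?chi_cs // !dec_chi /tau same_type.
Qed.

Definition type_decides_pair_order (A : structure L 'I_2) (G : nat -> nat) : Prop :=
  forall f1 f2, is_emb A K f1 -> is_emb A K f2 ->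
    pullback Ks (G \o f1) = pullback Ks (G \o f2) ->
    (G (f1 ord0) < G (f1 ord_max)) = (G (f2 ord0) < G (f2 ord_max)).

Lemma type_decides_pair_order_comp A G g :
  is_emb K K g -> type_decides_pair_order A G -> type_decides_pair_order A (G \o g).
Proof.
move=> g_emb G_dec f1 f2 f1_emb f2_emb.
exact: G_dec (is_emb_comp f1_emb g_emb) (is_emb_comp f2_emb g_emb).
Qed.

Lemma big_ramsey_decides_pair_orders (I : finType) (A : I -> structure L 'I_2) :
  exists G, is_emb K K G /\ forall i, type_decides_pair_order (A i) G.
Proof.
suff [G [G_emb G_dec]] : exists G, is_emb K K G /\
    forall i, i \in enum I -> type_decides_pair_order (A i) G.
  by exists G; split=> // i; apply: G_dec; rewrite mem_enum.
elim: (enum I) => [|i s [G [G_emb G_dec]]].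
  by exists id; split=> //; exact: is_emb_id.
have [g [g_emb g_dec]] := big_ramsey_refines_coloring (A i)
  (fun f => G (f ord0) < G (f ord_max)) G_emb.
exists (G \o g); split=> [|j]; first exact: is_emb_comp g_emb G_emb.
rewrite inE => /predU1P[-> //|j_s].
exact: type_decides_pair_order_comp g_emb (G_dec j j_s).
Qed.

End BigRamsey.

Lemma is_emb_reduct_pullback (L : lang) (E : Type) (arE : E -> nat) (T : Type)
    (M : structure L T) (Ms : structure (lang_ext L arE) T) g h :
  is_expansion M Ms -> is_emb M M g -> is_emb Ms (pullback Ms g) h -> is_emb M M h.
Proof.
move=> Ms_exp [_ g_rel] [h_inj h_rel]; split=> // s x.
by rewrite -Ms_exp h_rel /pullback Ms_exp (g_rel s (h \o x)).
Qed.

Section PairTypes.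

Variables (LS : finType) (ar : LS -> nat) (K : structure (Lang ar) nat).

Definition pair_atom := {s : LS & {ffun 'I_(ar s) -> 'I_2}}.

Definition pair_qf_type (a b : nat) : {set pair_atom} :=
  [set p : pair_atom | `[< @K (tag p) (pair_fn a b \o tagged p) >] ].

Definition qf_type_structure (d : {set pair_atom}) : structure (Lang ar) 'I_2 :=
  fun s x => (Tagged _ [ffun i => x i] : pair_atom) \in d.

Lemma pair_fn_inj a b : a <> b -> injective (pair_fn a b).
Proof.
have ord2_max (i : 'I_2) : i != ord0 -> i = ord_max.
  by case: i => [[|[|?]] ?] //= _; apply: val_inj.
rewrite /pair_fn => neq_ab i j; case: eqP => [->|/eqP/ord2_max ->];
  by case: eqP => [->|/eqP/ord2_max ->] // eq_ab; case: neq_ab.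
Qed.

Lemma pair_fn_emb a b :
  a <> b -> is_emb (qf_type_structure (pair_qf_type a b)) K (pair_fn a b).
Proof.
move=> neq_ab; split=> [|s x]; first exact: pair_fn_inj.
have -> : pair_fn a b \o x = pair_fn a b \o [ffun i => x i].
  by apply/funext => i /=; rewrite ffunE.
by rewrite /qf_type_structure inE; split=> /asboolP.
Qed.

Lemma pair_qf_type_eq a b c d :
  (forall s x, @K s (pair_fn a b \o x) <-> @K s (pair_fn c d \o x)) ->
  pair_qf_type a b = pair_qf_type c d.
Proof. by move=> same; apply/setP => p; rewrite !inE; exact/asbool_equiv_eq/same. Qed.

End PairTypes.

Theorem corollary2p5 (LS : finType) (ar : LS -> nat) (K : structure (Lang ar) nat)
  (E : Type) (arE : E -> nat) (Ks : structure (lang_ext (Lang ar) arE) nat) :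
  ultrahomogeneous K ->
  finite_BRD K ->
  big_ramsey_structure K Ks ->
  recurrent K Ks ->
  interprets_omega_order Ks.
Proof.
move=> _ _ Ks_brs Ks_rec; have Ks_exp := Ks_brs.1.
have [G [G_emb G_dec]] :=
  big_ramsey_decides_pair_orders Ks_brs (@qf_type_structure _ ar).
have [H H_emb] := Ks_rec G G_emb.
have H_Kemb := is_emb_reduct_pullback Ks_exp G_emb H_emb.
exists (fun a b => G (H a) < G (H b)); split;
  last exact/injective_order_iso/inj_comp/H_emb.1/G_emb.1.
move=> a b c d neq_ab neq_cd same_type.
have same_qf_type : pair_qf_type K a b = pair_qf_type K c d.
  apply: pair_qf_type_eq => s x.
  by rewrite -!Ks_exp; exact: (same_type (inl s) x).
have ab_emb := is_emb_comp (pair_fn_emb K neq_ab) H_Kemb.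
have cd_emb := is_emb_comp (pair_fn_emb K neq_cd) H_Kemb.
rewrite -same_qf_type in cd_emb.
suff /(G_dec _ _ _ ab_emb cd_emb) /= -> :
    pullback Ks (G \o (H \o pair_fn a b)) = pullback Ks (G \o (H \o pair_fn c d)) by [].
apply: etrans (is_emb_pullback _ H_emb) (etrans _ (esym (is_emb_pullback _ H_emb))).
exact: pullback_ext same_type.
Qed.
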